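(* Let $(\mathfrak{Q},\&,e)$ be a non-trivial unital quantale. Consider the following full subcategories of $\mathfrak{Q}\text{-}\mathbf{FOrd}$: $\mathfrak{Q}\text{-}\mathbf{POrd}$ (objects with $|x|\in\{\bot,e\}$ for all $x$), $\mathfrak{Q}\text{-}\mathbf{Ord}$ (objects with $|x|=e$ for all $x$), $\mathbf{POrd}$ (objects with $|x|\in\{\bot,e\}$ and $\alpha(x,y)\in\{\bot,e\}$ for all $x,y$), and $\mathbf{Ord}$ (objects with $|x|=e$ and $\alpha(x,y)\in\{\bot,e\}$ for all $x,y$). Then all the inclusions $\mathbf{Ord}\subseteq\mathbf{POrd}\subseteq\mathfrak{Q}\text{-}\mathbf{POrd}$, $\mathbf{Ord}\subseteq\mathfrak{Q}\text{-}\mathbf{Ord}\subseteq\mathfrak{Q}\text{-}\mathbf{POrd}\subseteq\mathfrak{Q}\text{-}\mathbf{FOrd}$ are coreflective. Specifically: (1) $\mathbf{POrd}$ is a coreflective subcategory of $\mathfrak{Q}\text{-}\mathbf{POrd}$, with the coreflector sending each $(X,|\cdot|,\alpha)\in\mathfrak{Q}\text{-}\mathbf{POrd}$ to its underlying preorder, i.e. to $(X,|\cdot|,\alpha')$ where $\alpha'(x,y)=e$ if $|x|=|y|=e$ and $e\le\alpha(x,y)$, and $\alpha'(x,y)=\bot$ otherwise; similarly $\mathbf{Ord}$ is a coreflective subcategory of $\mathfrak{Q}\text{-}\mathbf{Ord}$ via the underlying preorder. (2) $\mathfrak{Q}\text{-}\mathbf{Ord}$ is a coreflective subcategory of $\mathfrak{Q}\text{-}\mathbf{POrd}$,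 with the coreflector sending $(X,|\cdot|,\alpha)$ to $X_{\{e\}}=\{x\in X\mid |x|=e\}$ with the inherited $\mathfrak{Q}$-preorder; in particular $\mathbf{Ord}$ is a coreflective subcategory of $\mathbf{POrd}$. (3) $\mathfrak{Q}\text{-}\mathbf{POrd}$ is a coreflective subcategory of $\mathfrak{Q}\text{-}\mathbf{FOrd}$, with the coreflector sending $(X,|\cdot|,\alpha)$ to $X_{\{e,\bot\}}=\{x\in X\mid |x|=e\text{ or }|x|=\bot\}$ with the inherited membership map and $\mathfrak{Q}$-preorder.
   Context: A unital quantale $(\mathfrak{Q},\&,e)$ is a complete lattice with an associative multiplication $\&$ with unit $e$ preserving arbitrary joins in each variable; non-trivial means $\bot<e$. Implications: $p\& q\le r\iff p\le r/ q\iff q\le p\backslash r$. A $\mathfrak{Q}$-subset is a set $X$ with a map $|\cdot|\colon X\to\mathfrak{Q}$. A $\mathfrak{Q}$-preorder on it is a map $\alpha\colon X\times X\to\mathfrak{Q}$ with, for all $x,y,z$: $(\alpha(x,y)/|x|)\&|x|=\alpha(x,y)=|y|\&(|y|\backslash\alpha(x,y))$; $|x|\le\alpha(x,x)$; $(\alpha(y,z)/|y|)\&\alpha(x,y)=\alpha(y,z)\&(|y|\backslash\alpha(x,y))\le\alpha(x,z)$. The underlying preorder of $(X,\alpha)$ is $x\le y\iff |x|=|y|$ and $|x|\le\alpha(x,y)$. $\mathfrak{Q}\text{-}\mathbf{FOrd}$ has as objects the $\mathfrak{Q}$-preordered $\mathfrak{Q}$-subsets and as morphisms $f\colon(X,\alpha)\to(Y,\beta)$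 the maps with $|fx|=|x|$ and $\alpha(x,x')\le\beta(fx,fx')$ for all $x,x'$. A full subcategory is coreflective if its inclusion functor has a right adjoint (the coreflector). *)

From Stdlib Require Import ClassicalEpsilon.

(* A complete lattice is given by a partial order [qle] together with
   arbitrary suprema [qsup] of subsets (predicates). *)
Record Quantale := {
  Qc :> Type;
  qle : Qc -> Qc -> Prop;
  qle_refl : forall a, qle a a;
  qle_antisym : forall a b, qle a b -> qle b a -> a = b;
  qle_trans : forall a b c, qle a b -> qle b c -> qle a c;
  qsup : (Qc -> Prop) -> Qc;
  qsup_ub : forall (S : Qc -> Prop) a, S a -> qle a (qsup S);
  qsup_least : forall (S : Qc -> Prop) b, (forall a, S a -> qle a b) -> qle (qsup S) b;
  qmul : Qc -> Qc -> Qc;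
  qe : Qc;
  qmul_assoc : forall a b c, qmul a (qmul b c) = qmul (qmul a b) c;
  qmul_e_l : forall a, qmul qe a = a;
  qmul_e_r : forall a, qmul a qe = a;
  qmul_sup_l : forall (S : Qc -> Prop) b,
      qmul (qsup S) b = qsup (fun c => exists a, S a /\ c = qmul a b);
  qmul_sup_r : forall a (S : Qc -> Prop),
      qmul a (qsup S) = qsup (fun c => exists b, S b /\ c = qmul a b)
}.

Arguments qle {_}. Arguments qsup {_}. Arguments qmul {_}. Arguments qe {_}.

Definition qbot {Q : Quantale} : Q := qsup (fun _ => False).

Definition nontrivial (Q : Quantale) : Prop := qle (@qbot Q) qe /\ @qbot Q <> qe.

(* implications:  p & q <= r  <->  p <= r / q  <->  q <= p \ r *)
Definition rdiv {Q : Quantale} (r q : Q) : Q := qsup (fun p => qle (qmul p q) r).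
Definition ldiv {Q : Quantale} (p r : Q) : Q := qsup (fun q => qle (qmul p q) r).

Record QSub (Q : Quantale) := {
  carrier :> Type;
  qmem : carrier -> Q;
  qrel : carrier -> carrier -> Q
}.
Arguments carrier {_}. Arguments qmem {_ _}. Arguments qrel {_ _}.

Definition isQPreorder {Q : Quantale} (A : QSub Q) : Prop :=
  (forall x y : A,
      qmul (rdiv (qrel x y) (qmem x)) (qmem x) = qrel x y /\
      qrel x y = qmul (qmem y) (ldiv (qmem y) (qrel x y))) /\
  (forall x : A, qle (qmem x) (qrel x x)) /\
  (forall x y z : A,
      qmul (rdiv (qrel y z) (qmem y)) (qrel x y)
        = qmul (qrel y z) (ldiv (qmem y) (qrel x y)) /\
      qle (qmul (rdiv (qrel y z) (qmem y)) (qrel x y)) (qrel x z)).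

Definition isFOrd {Q : Quantale} (A : QSub Q) : Prop := isQPreorder A.

Definition isQPOrd {Q : Quantale} (A : QSub Q) : Prop :=
  isQPreorder A /\ forall x : A, qmem x = qbot \/ qmem x = qe.

Definition isQOrd {Q : Quantale} (A : QSub Q) : Prop :=
  isQPreorder A /\ forall x : A, qmem x = qe.

Definition isPOrd {Q : Quantale} (A : QSub Q) : Prop :=
  isQPreorder A /\ (forall x : A, qmem x = qbot \/ qmem x = qe) /\
  (forall x y : A, qrel x y = qbot \/ qrel x y = qe).

Definition isOrd {Q : Quantale} (A : QSub Q) : Prop :=
  isQPreorder A /\ (forall x : A, qmem x = qe) /\
  (forall x y : A, qrel x y = qbot \/ qrel x y = qe).

Definition isMorph {Q : Quantale} (A B : QSub Q) (f : A -> B) : Prop :=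
  (forall x : A, qmem (f x) = qmem x) /\
  (forall x x' : A, qle (qrel x x') (qrel (f x) (f x'))).

(* [eps : C -> A] is a coreflection arrow of A into the full subcategory P,
   i.e. a universal arrow from the inclusion functor to A (the counit of the
   adjunction at A): C is in P, eps is a morphism, and every morphism
   f : B -> A with B in P factors uniquely as eps o g. *)
Definition isCoreflection {Q : Quantale} (P : QSub Q -> Prop)
    (A C : QSub Q) (eps : C -> A) : Prop :=
  P C /\ isMorph C A eps /\
  forall (B : QSub Q) (f : B -> A), P B -> isMorph B A f ->
    exists g : B -> C, isMorph B C g /\ (forall b, eps (g b) = f b) /\
      forall g' : B -> C, isMorph B C g' -> (forall b, eps (g' b) = f b) ->
        forall b, g' b = g b.

(* The full subcategory P (contained in P') is coreflective in P':
   the inclusion functor P -> P' has a right adjoint, i.e. every object of P'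
   admits a coreflection arrow into P. *)
Definition coreflective {Q : Quantale} (P P' : QSub Q -> Prop) : Prop :=
  (forall A, P A -> P' A) /\
  forall A, P' A -> exists (C : QSub Q) (eps : C -> A), isCoreflection P A C eps.

Definition underlying {Q : Quantale} (A : QSub Q) : QSub Q :=
  {| carrier := carrier A;
     qmem := @qmem Q A;
     qrel := fun x y =>
       if excluded_middle_informative
            (qmem x = qe /\ qmem y = qe /\ qle qe (qrel x y))
       then qe else qbot |}.

Definition restrict_e {Q : Quantale} (A : QSub Q) : QSub Q :=
  {| carrier := { x : carrier A | qmem x = qe };
     qmem := fun x => qmem (proj1_sig x);
     qrel := fun x y => qrel (proj1_sig x) (proj1_sig y) |}.

Definition restrict_ebot {Q : Quantale} (A : QSub Q) : QSub Q :=
  {| carrier := { x : carrier A | qmem x = qe \/ qmem x = qbot };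
     qmem := fun x => qmem (proj1_sig x);
     qrel := fun x y => qrel (proj1_sig x) (proj1_sig y) |}.

From Stdlib Require Import ClassicalEpsilon ProofIrrelevance.

(* Morphisms preserve membership degrees, so a morphism out of an object whose
   degrees lie in a set S factors through the subobject X_S of elements of
   degree in S, which gives (2) and (3).  For (1): over degrees and values in
   {bot, e} the Q-preorder axioms say no more than that the pairs of value e
   form a preorder on the elements of degree e, and a morphism out of such a
   crisp object only has to preserve the value e, i.e. to land in the
   underlying preorder of its target.  In every case the counit is injective,
   so factorizations are unique. *)

Section Quantale.
Context {Q : Quantale}.

Lemma qbot_le (a : Q) : qle qbot a.
Proof. apply qsup_least; intros _ []. Qed.

Lemma qsup_empty (S : Q -> Prop) : (forall c, ~ S c) -> qsup S = qbot.
Proof.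
  intros HS. apply qle_antisym; [|apply qbot_le].
  apply qsup_least; intros c Hc; destruct (HS c Hc).
Qed.

Lemma qmul_bot_r (a : Q) : qmul a qbot = qbot.
Proof. unfold qbot at 1; rewrite qmul_sup_r; apply qsup_empty; intros c [b [[] _]]. Qed.

Lemma qmul_bot_l (a : Q) : qmul qbot a = qbot.
Proof. unfold qbot at 1; rewrite qmul_sup_l; apply qsup_empty; intros c [b [[] _]]. Qed.

Lemma qsup_pair_le (a b : Q) : qle a b -> qsup (fun c => c = a \/ c = b) = b.
Proof.
  intros Hab. apply qle_antisym.
  - apply qsup_least; intros c [-> | ->]; [exact Hab | apply qle_refl].
  - apply qsup_ub; right; reflexivity.
Qed.

Lemma qmul_le_l (a a' b : Q) : qle a a' -> qle (qmul a b) (qmul a' b).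
Proof.
  intros Ha. rewrite <- (qsup_pair_le a a' Ha), qmul_sup_l.
  apply qsup_ub; exists a; split; [left|]; reflexivity.
Qed.

Lemma qmul_le_r (a b b' : Q) : qle b b' -> qle (qmul a b) (qmul a b').
Proof.
  intros Hb. rewrite <- (qsup_pair_le b b' Hb), qmul_sup_r.
  apply qsup_ub; exists b; split; [left|]; reflexivity.
Qed.

Lemma qmul_le (a a' b b' : Q) :
  qle a a' -> qle b b' -> qle (qmul a b) (qmul a' b').
Proof.
  intros Ha Hb. apply qle_trans with (qmul a' b); [apply qmul_le_l | apply qmul_le_r]; assumption.
Qed.

Lemma rdiv_e (a : Q) : rdiv a qe = a.
Proof.
  apply qle_antisym.
  - apply qsup_least; intros p Hp; rewrite qmul_e_r in Hp; exact Hp.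
  - apply qsup_ub; rewrite qmul_e_r; apply qle_refl.
Qed.

Lemma ldiv_e (a : Q) : ldiv qe a = a.
Proof.
  apply qle_antisym.
  - apply qsup_least; intros p Hp; rewrite qmul_e_l in Hp; exact Hp.
  - apply qsup_ub; rewrite qmul_e_l; apply qle_refl.
Qed.

Section QPreorder.
Variable A : QSub Q.
Hypothesis HA : isQPreorder A.

Lemma qrel_bot_l (x y : A) : qmem x = qbot -> qrel x y = qbot.
Proof.
  intros Ex. destruct HA as [Hdiv _]. destruct (Hdiv x y) as [Hxy _].
  rewrite Ex, qmul_bot_r in Hxy. symmetry; exact Hxy.
Qed.

Lemma qrel_bot_r (x y : A) : qmem y = qbot -> qrel x y = qbot.
Proof.
  intros Ey. destruct HA as [Hdiv _]. destruct (Hdiv x y) as [_ Hxy].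
  rewrite Ey, qmul_bot_l in Hxy. exact Hxy.
Qed.

Lemma qrel_e_trans (x y z : A) :
  qmem y = qe -> qle qe (qrel x y) -> qle qe (qrel y z) -> qle qe (qrel x z).
Proof.
  intros Ey Hxy Hyz. destruct HA as [_ [_ Htrans]].
  destruct (Htrans x y z) as [_ Hxz]. rewrite Ey, rdiv_e in Hxz.
  apply qle_trans with (qmul (qrel y z) (qrel x y)); [|exact Hxz].
  rewrite <- (qmul_e_l Q qe) at 1. apply qmul_le; assumption.
Qed.

End QPreorder.

Lemma isOrd_isPOrd (A : QSub Q) : isOrd A -> isPOrd A.
Proof.
  intros [HA [Hmem Hrel]].
  split; [exact HA | split; [intros x; right; apply Hmem | exact Hrel]].
Qed.

Lemma isPOrd_isQPOrd (A : QSub Q) : isPOrd A -> isQPOrd A.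
Proof. intros [HA [Hmem _]]. split; assumption. Qed.

Lemma isOrd_isQOrd (A : QSub Q) : isOrd A -> isQOrd A.
Proof. intros [HA [Hmem _]]. split; assumption. Qed.

Lemma isQOrd_isQPOrd (A : QSub Q) : isQOrd A -> isQPOrd A.
Proof. intros [HA Hmem]. split; [exact HA | intros x; right; apply Hmem]. Qed.

Lemma isQPOrd_isFOrd (A : QSub Q) : isQPOrd A -> isFOrd A.
Proof. intros [HA _]. exact HA. Qed.

Lemma isCoreflection_of_injective (P : QSub Q -> Prop) (A C : QSub Q) (eps : C -> A) :
  P C -> isMorph C A eps -> (forall c c', eps c = eps c' -> c = c') ->
  (forall (B : QSub Q) (f : B -> A), P B -> isMorph B A f ->
     exists g : B -> C, isMorph B C g /\ forall b, eps (g b) = f b) ->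
  isCoreflection P A C eps.
Proof.
  intros HPC Heps Hinj Hfact. split; [exact HPC | split; [exact Heps|]].
  intros B f HPB Hf. destruct (Hfact B f HPB Hf) as [g [Hg Hgf]].
  exists g. split; [exact Hg | split; [exact Hgf|]].
  intros g' _ Hg'f b. apply Hinj. rewrite Hg'f, Hgf. reflexivity.
Qed.

Lemma coreflective_of (P P' : QSub Q -> Prop) (C : QSub Q -> QSub Q)
    (eps : forall A : QSub Q, C A -> A) :
  (forall A, P A -> P' A) ->
  (forall A, P' A -> isCoreflection P A (C A) (eps A)) ->
  coreflective P P'.
Proof. intros Hincl Hcor. split; [exact Hincl|]. intros A HA. exists (C A), (eps A). auto. Qed.

Definition restrict_mem (A : QSub Q) (S : Q -> Prop) : QSub Q :=
  {| carrier := { x : carrier A | S (qmem x) };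
     qmem := fun x => qmem (proj1_sig x);
     qrel := fun x y => qrel (proj1_sig x) (proj1_sig y) |}.

Lemma isQPreorder_restrict_mem (A : QSub Q) (S : Q -> Prop) :
  isQPreorder A -> isQPreorder (restrict_mem A S).
Proof.
  intros [Hdiv [Hrefl Htrans]].
  split; [|split]; intros; [apply Hdiv | apply Hrefl | apply Htrans].
Qed.

Lemma restrict_mem_coreflection (P : QSub Q -> Prop) (A : QSub Q) (S : Q -> Prop) :
  P (restrict_mem A S) -> (forall B, P B -> forall x : B, S (qmem x)) ->
  isCoreflection P A (restrict_mem A S) (@proj1_sig _ _).
Proof.
  intros HPA HP. apply isCoreflection_of_injective; [exact HPA | | |].
  - split; intros; [reflexivity | apply qle_refl].
  - intros c c'. apply eq_sig_hprop. intros; apply proof_irrelevance.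
  - intros B f HB [Hf_mem Hf_rel].
    assert (Hf_S : forall b, S (qmem (f b))) by (intros b; rewrite Hf_mem; exact (HP B HB b)).
    exists (fun b => exist _ (f b) (Hf_S b)).
    split; [split; intros; [apply Hf_mem | apply Hf_rel] | reflexivity].
Qed.

Lemma restrict_e_coreflection (P : QSub Q -> Prop) (A : QSub Q) :
  P (restrict_e A) -> (forall B, P B -> forall x : B, qmem x = qe) ->
  isCoreflection P A (restrict_e A) (@proj1_sig _ _).
Proof. exact (restrict_mem_coreflection P A (fun a => a = qe)). Qed.

Lemma restrict_ebot_coreflection (P : QSub Q -> Prop) (A : QSub Q) :
  P (restrict_ebot A) -> (forall B, P B -> forall x : B, qmem x = qe \/ qmem x = qbot) ->
  isCoreflection P A (restrict_ebot A) (@proj1_sig _ _).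
Proof. exact (restrict_mem_coreflection P A (fun a => a = qe \/ a = qbot)). Qed.

Lemma isQOrd_restrict_e (A : QSub Q) : isQPreorder A -> isQOrd (restrict_e A).
Proof.
  intros HA. split; [exact (isQPreorder_restrict_mem A (fun a => a = qe) HA)|].
  intros [x Ex]; exact Ex.
Qed.

Lemma isOrd_restrict_e (A : QSub Q) : isPOrd A -> isOrd (restrict_e A).
Proof.
  intros [HA [_ Hrel]]. destruct (isQOrd_restrict_e A HA) as [HAe Hmem].
  split; [exact HAe | split; [exact Hmem | intros x y; apply Hrel]].
Qed.

Lemma isQPOrd_restrict_ebot (A : QSub Q) : isQPreorder A -> isQPOrd (restrict_ebot A).
Proof.
  intros HA. split; [exact (isQPreorder_restrict_mem A (fun a => a = qe \/ a = qbot) HA)|].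
  intros [x [Ex|Ex]]; [right|left]; exact Ex.
Qed.

Lemma underlying_qrel_crisp (A : QSub Q) (x y : underlying A) :
  qrel x y = qbot \/ qrel x y = qe.
Proof. cbn. destruct excluded_middle_informative; auto. Qed.

Section NonTrivial.
Hypothesis qbot_neq_qe : @qbot Q <> qe.

Lemma underlying_qrel_e (A : QSub Q) (x y : A) :
  @qrel Q (underlying A) x y = qe <-> qmem x = qe /\ qmem y = qe /\ qle qe (qrel x y).
Proof.
  cbn. destruct excluded_middle_informative; split; intros E; tauto.
Qed.

Lemma qmem_e_of_qrel_e (A : QSub Q) (x y : A) :
  isQPOrd A -> qrel x y = qe -> qmem x = qe /\ qmem y = qe.
Proof.
  intros [HA Hmem] Exy. split.
  - destruct (Hmem x) as [Ex|Ex]; [|exact Ex].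
    destruct qbot_neq_qe. rewrite <- Exy. symmetry. exact (qrel_bot_l A HA x y Ex).
  - destruct (Hmem y) as [Ey|Ey]; [|exact Ey].
    destruct qbot_neq_qe. rewrite <- Exy. symmetry. exact (qrel_bot_r A HA x y Ey).
Qed.

Lemma isQPreorder_crisp (A : QSub Q) :
  (forall x : A, qmem x = qbot \/ qmem x = qe) ->
  (forall x y : A, qrel x y = qbot \/ qrel x y = qe) ->
  (forall x y : A, qrel x y = qe -> qmem x = qe /\ qmem y = qe) ->
  (forall x : A, qmem x = qe -> qrel x x = qe) ->
  (forall x y z : A, qrel x y = qe -> qrel y z = qe -> qrel x z = qe) ->
  isQPreorder A.
Proof.
  intros Hmem Hrel Hsupp Hrefl Htrans.
  assert (Hbot_l : forall x y : A, qmem x = qbot -> qrel x y = qbot).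
  { intros x y Ex. destruct (Hrel x y) as [E|E]; [exact E|].
    destruct qbot_neq_qe. rewrite <- Ex. apply (Hsupp x y E). }
  assert (Hbot_r : forall x y : A, qmem y = qbot -> qrel x y = qbot).
  { intros x y Ey. destruct (Hrel x y) as [E|E]; [exact E|].
    destruct qbot_neq_qe. rewrite <- Ey. apply (Hsupp x y E). }
  split; [|split].
  - intros x y. split.
    + destruct (Hmem x) as [Ex|Ex]; rewrite Ex.
      * rewrite qmul_bot_r, (Hbot_l x y Ex). reflexivity.
      * rewrite rdiv_e, qmul_e_r. reflexivity.
    + destruct (Hmem y) as [Ey|Ey]; rewrite Ey.
      * rewrite qmul_bot_l. exact (Hbot_r x y Ey).
      * rewrite ldiv_e, qmul_e_l. reflexivity.
  - intros x. destruct (Hmem x) as [Ex|Ex].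
    + rewrite Ex. apply qbot_le.
    + rewrite (Hrefl x Ex), Ex. apply qle_refl.
  - intros x y z. destruct (Hmem y) as [Ey|Ey].
    + rewrite (Hbot_l y z Ey), (Hbot_r x y Ey), qmul_bot_l, qmul_bot_r.
      split; [reflexivity | apply qbot_le].
    + rewrite Ey, rdiv_e, ldiv_e. split; [reflexivity|].
      destruct (Hrel y z) as [Eyz|Eyz]; [rewrite Eyz, qmul_bot_l; apply qbot_le|].
      destruct (Hrel x y) as [Exy|Exy]; [rewrite Exy, qmul_bot_r; apply qbot_le|].
      rewrite (Htrans x y z Exy Eyz), Eyz, Exy, qmul_e_l. apply qle_refl.
Qed.

Lemma isPOrd_underlying (A : QSub Q) : isQPOrd A -> isPOrd (underlying A).
Proof.
  intros [HA Hmem].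
  split; [|split; [exact Hmem | apply underlying_qrel_crisp]].
  apply isQPreorder_crisp; [exact Hmem | apply underlying_qrel_crisp | | |].
  - intros x y Exy. apply underlying_qrel_e in Exy. tauto.
  - intros x Ex. apply underlying_qrel_e. split; [exact Ex | split; [exact Ex|]].
    rewrite <- Ex at 1. apply (proj1 (proj2 HA)).
  - intros x y z Exy Eyz. apply underlying_qrel_e in Exy, Eyz.
    destruct Exy as [Ex [Ey Hxy]], Eyz as [_ [Ez Hyz]].
    apply underlying_qrel_e. split; [exact Ex | split; [exact Ez|]].
    exact (qrel_e_trans A HA x y z Ey Hxy Hyz).
Qed.

Lemma isOrd_underlying (A : QSub Q) : isQOrd A -> isOrd (underlying A).
Proof.
  intros HA. destruct (isPOrd_underlying A (isQOrd_isQPOrd A HA)) as [HAu [_ Hrel]].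
  split; [exact HAu | split; [exact (proj2 HA) | exact Hrel]].
Qed.

Lemma underlying_coreflection (P : QSub Q -> Prop) (A : QSub Q) :
  P (underlying A) -> (forall B, P B -> isPOrd B) ->
  isCoreflection P A (underlying A) (fun x => x).
Proof.
  intros HPA HP. apply isCoreflection_of_injective; [exact HPA | | tauto |].
  - split; [reflexivity|]. intros x y. cbn.
    destruct excluded_middle_informative as [[_ [_ H]]|_]; [exact H | apply qbot_le].
  - intros B f HB [Hf_mem Hf_rel].
    exists f. split; [|reflexivity]. split; [exact Hf_mem|]. intros x x'.
    destruct (HP B HB) as [HBpre [HBmem HBrel]].
    destruct (HBrel x x') as [E|E]; rewrite E; [apply qbot_le|].
    destruct (qmem_e_of_qrel_e B x x' (conj HBpre HBmem) E) as [Ex Ex'].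
    rewrite (proj2 (underlying_qrel_e A (f x) (f x'))); [apply qle_refl|].
    rewrite !Hf_mem. split; [exact Ex | split; [exact Ex' | rewrite <- E; apply Hf_rel]].
Qed.

End NonTrivial.
End Quantale.

Theorem theorem3p9 (Q : Quantale) (hQ : nontrivial Q) :
  (* all the inclusions are coreflective *)
  (coreflective (@isOrd Q) (@isPOrd Q) /\
   coreflective (@isPOrd Q) (@isQPOrd Q) /\
   coreflective (@isOrd Q) (@isQOrd Q) /\
   coreflective (@isQOrd Q) (@isQPOrd Q) /\
   coreflective (@isQPOrd Q) (@isFOrd Q)) /\
  (* (1) the underlying preorder is the coreflector, counit the identity *)
  (forall A : QSub Q, isQPOrd A ->
     isCoreflection (@isPOrd Q) A (underlying A) (fun x => x)) /\
  (forall A : QSub Q, isQOrd A ->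
     isCoreflection (@isOrd Q) A (underlying A) (fun x => x)) /\
  (* (2) X_{e} with the inclusion is the coreflector *)
  (forall A : QSub Q, isQPOrd A ->
     isCoreflection (@isQOrd Q) A (restrict_e A) (@proj1_sig _ _)) /\
  (forall A : QSub Q, isPOrd A ->
     isCoreflection (@isOrd Q) A (restrict_e A) (@proj1_sig _ _)) /\
  (* (3) X_{e,bot} with the inclusion is the coreflector *)
  (forall A : QSub Q, isFOrd A ->
     isCoreflection (@isQPOrd Q) A (restrict_ebot A) (@proj1_sig _ _)).
Proof.
  pose proof (proj2 hQ) as hne.
  assert (U1 : forall A : QSub Q, isQPOrd A ->
     isCoreflection isPOrd A (underlying A) (fun x => x)).
  { intros A HA. apply (underlying_coreflection hne);
      [exact (isPOrd_underlying hne A HA) | exact (fun B HB => HB)]. }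
  assert (U2 : forall A : QSub Q, isQOrd A ->
     isCoreflection isOrd A (underlying A) (fun x => x)).
  { intros A HA. apply (underlying_coreflection hne);
      [exact (isOrd_underlying hne A HA) | exact isOrd_isPOrd]. }
  assert (R1 : forall A : QSub Q, isQPOrd A ->
     isCoreflection isQOrd A (restrict_e A) (@proj1_sig _ _)).
  { intros A [HA _]. apply restrict_e_coreflection;
      [exact (isQOrd_restrict_e A HA) | exact (fun B HB => proj2 HB)]. }
  assert (R2 : forall A : QSub Q, isPOrd A ->
     isCoreflection isOrd A (restrict_e A) (@proj1_sig _ _)).
  { intros A HA. apply restrict_e_coreflection;
      [exact (isOrd_restrict_e A HA) | intros B [_ [HB _]]; exact HB]. }
  assert (R3 : forall A : QSub Q, isFOrd A ->
     isCoreflection isQPOrd A (restrict_ebot A) (@proj1_sig _ _)).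
  { intros A HA. apply restrict_ebot_coreflection; [exact (isQPOrd_restrict_ebot A HA)|].
    intros B [_ HB] x. destruct (HB x); auto. }
  refine (conj (conj _ (conj _ (conj _ (conj _ _))))
            (conj U1 (conj U2 (conj R1 (conj R2 R3))))).
  - exact (coreflective_of _ _ _ _ isOrd_isPOrd R2).
  - exact (coreflective_of _ _ _ _ isPOrd_isQPOrd U1).
  - exact (coreflective_of _ _ _ _ isOrd_isQOrd U2).
  - exact (coreflective_of _ _ _ _ isQOrd_isQPOrd R1).
  - exact (coreflective_of _ _ _ _ isQPOrd_isFOrd R3).
Qed.
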